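(* Let $k\ge1$ be the cache size, let $\mathcal{A}$ be a conservative or marking paging algorithm and $\mathcal{B}$ any paging algorithm. Then for any access graph $G$, \[\mathrm{Min}^G(\mathcal{B},\mathcal{A})\ge-1+\frac1k\quad\text{and}\quad \mathrm{Max}^G(\mathcal{A},\mathcal{B})\le1-\frac1k.\]
   Context: Paging: a cache holds at most $k$ pages and is initially empty. A request to a page in the cache is a hit; otherwise it is a fault, the page is brought into the cache, evicting a page first if the cache is full. $\mathcal{A}(I)$ is the number of faults of $\mathcal{A}$ on request sequence $I$. $k$-phases: a request sequence is divided recursively: phase 0 is empty, and for $i\ge1$ phase $i$ is a maximal sequence following phase $i-1$ containing at most $k$ distinct pages. An algorithm is conservative if it incurs at most $k$ faults on any consecutive subsequence containing at most $k$ distinct pages. An algorithm is marking if, within any $k$-phase, once a page has been requested in that phase it is not evicted for the rest of that phase. Access graph: a graph $G$ whose vertices are the pages; a request sequence respects $G$ if any two consecutive requests are identical or adjacent in $G$; $L(G)$ is the set of such sequences. Relative interval: $\mathrm{Min}_{\mathcal{A},\mathcal{B}}(n,G)=\min\{\mathcal{A}(I)-\mathcal{B}(I): I\in L(G),|I|=n\}$, $\mathrm{Max}_{\mathcal{A},\mathcal{B}}(n,G)$ analogously with max; $\mathrm{Min}^G(\mathcal{A},\mathcal{B})=\liminf_{n\to\infty}\mathrm{Min}_{\mathcal{A},\mathcal{B}}(n,G)/n$ and $\mathrm{Max}^G(\mathcal{A},\mathcal{B})=\limsup_{n\to\infty}\mathrm{Max}_{\mathcal{A},\mathcal{B}}(n,G)/n$.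 *)

From HB Require Import structures.
From mathcomp Require Import all_boot all_order all_algebra.
Set Implicit Arguments. Unset Strict Implicit. Unset Printing Implicit Defensive.
Import Order.TTheory GRing.Theory Num.Theory.

Section Paging.
Variable T : finType.   (* the pages = vertices of the access graph *)
Variable k : nat.

(* A deterministic online paging algorithm: when a fault occurs on a full
   cache, it chooses the page to evict as a function of the request history
   (including the current request) and the current cache contents.  If the
   returned page is not in the cache, some page of the cache is evicted
   instead (so every function yields a legitimate demand-paging algorithm). *)
Record paging_alg := PagingAlg { evict : seq T -> {set T} -> T }.

Definition step (A : paging_alg) (h : seq T) (C : {set T}) (x : T) : {set T} :=
  if x \in C then C
  else if #|C| < k then x |: C
  else let y := evict A h C in
       let v := if y \in C then y else odflt x [pick z in C] in
       x |: (C :\ v).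

(* caches_from A h C s : the cache contents before each request of s, and
   after the last one (size s + 1 entries); h = history so far. *)
Fixpoint caches_from (A : paging_alg) (h : seq T) (C : {set T}) (s : seq T)
  : seq {set T} :=
  match s with
  | [::] => [:: C]
  | x :: s' => C :: caches_from A (rcons h x) (step A (rcons h x) C x) s'
  end.

(* cache contents after the first i requests of I (initially empty) *)
Definition cache_at (A : paging_alg) (I : seq T) (i : nat) : {set T} :=
  nth set0 (caches_from A [::] set0 I) i.

Fixpoint faults_from (A : paging_alg) (h : seq T) (C : {set T}) (s : seq T)
  : seq bool :=
  match s with
  | [::] => [::]
  | x :: s' => (x \notin C) :: faults_from A (rcons h x) (step A (rcons h x) C x) s'
  end.

Definition fault_at (A : paging_alg) (I : seq T) (i : nat) : bool :=
  nth false (faults_from A [::] set0 I) i.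

Definition cost (A : paging_alg) (I : seq T) : nat :=
  count id (faults_from A [::] set0 I).

(* k-phases: greedy maximal decomposition; phase_ids I lists, for each
   request, the (1-based) index of its k-phase. *)
Fixpoint phase_ids_from (D : {set T}) (p : nat) (s : seq T) : seq nat :=
  match s with
  | [::] => [::]
  | x :: s' =>
      if (x \in D) || (#|D| < k) then p :: phase_ids_from (x |: D) p s'
      else p.+1 :: phase_ids_from [set x] p.+1 s'
  end.

Definition phase_ids (I : seq T) : seq nat := phase_ids_from set0 1 I.

(* conservative: at most k faults on any consecutive subsequence (positions
   a..b-1 of I) containing at most k distinct pages *)
Definition conservative (A : paging_alg) : Prop :=
  forall (I : seq T) (a b : nat), a <= b <= size I ->
    #|[set x in take (b - a) (drop a I)]| <= k ->
    \sum_(a <= i < b) fault_at A I i <= k.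

(* marking: a page requested at position i is not evicted at any later
   position j of the same k-phase, i.e. it is in the cache after request j *)
Definition marking (A : paging_alg) : Prop :=
  forall (I : seq T) (x0 : T) (i j : nat), i <= j < size I ->
    nth 0 (phase_ids I) i = nth 0 (phase_ids I) j ->
    nth x0 I i \in cache_at A I j.+1.

Definition respects (G : rel T) (I : seq T) : bool :=
  sorted (fun x y => (x == y) || G x y) I.

End Paging.

From mathcomp Require Import all_classical all_reals all_analysis.

Section Relative.
Variable R : realType.
Variable T : finType.
Variable k : nat.
Local Open Scope ring_scope.
Local Open Scope classical_set_scope.
Local Open Scope ereal_scope.

Definition diffs (A B : paging_alg T) (n : nat) (G : rel T) : set (\bar R) :=
  [set ((cost k A I)%:R - (cost k B I)%:R)%R%:E | I in [set I : seq T | respects G I /\ size I = n]].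

Definition MinAB (A B : paging_alg T) (n : nat) (G : rel T) : \bar R :=
  ereal_inf (diffs A B n G).
Definition MaxAB (A B : paging_alg T) (n : nat) (G : rel T) : \bar R :=
  ereal_sup (diffs A B n G).

Definition MinG (G : rel T) (A B : paging_alg T) : \bar R :=
  limn_einf (fun n => MinAB A B n G * (n%:R^-1)%R%:E).
Definition MaxG (G : rel T) (A B : paging_alg T) : \bar R :=
  limn_esup (fun n => MaxAB A B n G * (n%:R^-1)%R%:E).

End Relative.

(* Cut the request sequence into its k-phases. Within a phase, A faults at most
   k times: a conservative A because a phase is a segment with at most k
   distinct pages, a marking A because a page it faults on stays cached until
   the phase ends, so its faults in a phase are on distinct pages. A phase of
   length l therefore costs A at most min(k, l) <= (1 - 1/k) l + 1. Any
   algorithm B faults at least once per phase: the first page of the next phase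
   and the k pages of the current one are k + 1 distinct pages, which B cannot
   all hold. Hence A(I) - B(I) <= (1 - 1/k) |I| for every request sequence I,
   and dividing by |I| bounds both Max(A, B) and Min(B, A). *)
From HB Require Import structures.
From mathcomp Require Import all_boot all_order all_algebra.
From mathcomp Require Import zify.

Lemma sorted_ltn_count (L : seq nat) j i : sorted leq L -> i < size L ->
  (i < count (fun q => q < j) L) = (nth 0 L i < j).
Proof.
elim: L i => [|q L IH] i //= sL.
have sL' := path_sorted sL; have qL := order_path_min leq_trans sL.
case: (ltnP q j) => [qj|jq] /=.
  by case: i => [|i] //= lti; rewrite add1n ltnS IH.
have -> : count (fun q => q < j) L = 0.
  by apply/eqP; rewrite -leqn0 leqNgt -has_count; apply/hasPn => r /(allP qL) qr;
     rewrite -leqNgt (leq_trans jq qr).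
case: i => [|i] /= lti; first by rewrite [RHS]ltnNge jq.
by apply/esym/negbTE; rewrite -leqNgt (leq_trans jq ((all_nthP 0 qL) i lti)).
Qed.

Lemma sorted_nth_eq_count (L : seq nat) j i : sorted leq L -> i < size L ->
  (nth 0 L i == j) = (count (fun q => q < j) L <= i < count (fun q => q < j.+1) L).
Proof.
move=> sL lti.
by rewrite leqNgt !sorted_ltn_count // -leqNgt ltnS andbC -eqn_leq.
Qed.

Lemma big_nat_partition (n M : nat) (ph F : nat -> nat) :
  (forall i, i < n -> 0 < ph i <= M) ->
  \sum_(0 <= i < n) F i = \sum_(1 <= j < M.+1) \sum_(0 <= i < n | ph i == j) F i.
Proof.
move=> phM; under [RHS]eq_bigr do rewrite big_mkcond.
rewrite exchange_big_nat /=; apply: eq_big_nat => i /phM /andP[ph_gt0 phMi].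
rewrite (@big_cat_nat _ _ _ (ph i)) //; last exact: leqW.
rewrite (@big_ltn _ _ _ (ph i)) ?ltnS // eqxx.
rewrite big_nat_cond big1 => [|j /andP[/andP[_ ltj] _]]; last by rewrite gtn_eqF.
rewrite big_nat_cond big1 => [|j /andP[/andP[ltj _] _]]; last by rewrite ltn_eqF.
by rewrite /= add0n addn0.
Qed.

Lemma sum_bool_classes_le (k n M : nat) (ph : nat -> nat) (f : nat -> bool) :
  0 < k -> (forall i, i < n -> 0 < ph i <= M) ->
  (forall j, \sum_(0 <= i < n | ph i == j) f i <= k) ->
  k * \sum_(0 <= i < n) f i <= k.-1 * n + k * M.
Proof.
move=> k_gt0 phM fk.
have sizeE : n = \sum_(1 <= j < M.+1) \sum_(0 <= i < n | ph i == j) 1.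
  by rewrite -big_nat_partition // sum_nat_const_nat muln1 subn0.
have classesE : M = \sum_(1 <= j < M.+1) 1.
  by rewrite sum_nat_const_nat muln1 subSS subn0.
rewrite (@big_nat_partition n M ph (fun i => f i : nat) phM).
rewrite [in k * M]classesE [in k.-1 * n]sizeE !big_distrr -big_split /=.
apply: leq_sum => j _.
set c := \sum_(0 <= i < n | ph i == j) (f i : nat).
have cl : c <= \sum_(0 <= i < n | ph i == j) 1 by apply: leq_sum => i _; exact: leq_b1.
(* k c = (k - 1) c + c <= (k - 1) (class size) + k *)
rewrite -{1}(prednK k_gt0) mulSn addnC muln1 leq_add ?fk //.
by rewrite leq_mul2l cl orbT.
Qed.

Section Phases.
Variables (T : finType) (k : nat).
Hypothesis k_gt0 : 0 < k.
Implicit Types (A B : paging_alg T) (h s I : seq T) (C D : {set T}) (x : T).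

Lemma size_faults_from A h C s : size (faults_from k A h C s) = size s.
Proof. by elim: s h C => //= x s IH h C; rewrite IH. Qed.

Lemma size_phase_ids_from D p s : size (phase_ids_from k D p s) = size s.
Proof. by elim: s D p => //= x s IH D p; case: ifP => _ /=; rewrite IH. Qed.

Lemma size_phase_ids I : size (phase_ids k I) = size I.
Proof. exact: size_phase_ids_from. Qed.

Lemma nth_faults_from A h C s x0 i : i < size s ->
  nth false (faults_from k A h C s) i =
  (nth x0 s i \notin nth set0 (caches_from k A h C s) i).
Proof. by elim: s h C i => //= x s IH h C [|i] //= /IH. Qed.

Lemma cost_sum_fault_at A I : cost k A I = \sum_(0 <= i < size I) fault_at k A I i.
Proof.
rewrite /cost /fault_at -sum1_count (big_nth false) size_faults_from big_mkcond /=.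
by apply: eq_bigr => i _; case: nth.
Qed.

Lemma mem_step A h C x : x \in step k A h C x.
Proof. by rewrite /step; case: ifP => // _; case: ifP => _; rewrite setU11. Qed.

Lemma card_step A h C x : #|C| <= k -> #|step k A h C x| <= k.
Proof.
move=> Ck; rewrite /step; case: ifP => // xC; case: ltnP => [|kC].
  by rewrite cardsU1 xC.
set v := (if _ \in C then _ else _).
have vC : v \in C.
  rewrite /v; case: ifP => // _; case: pickP => [//|C0].
  suff: #|C| = 0 by lia.
  by apply/eqP; rewrite cards_eq0; apply/eqP/setP => z; rewrite inE C0.
by have := cardsD1 v C; rewrite vC cardsU1; case: (x \notin _) => /=; lia.
Qed.

Lemma path_phase_ids_from D p s : path leq p (phase_ids_from k D p s).
Proof.
by elim: s D p => //= x s IH D p; case: ifP => _ /=; rewrite ?leqnn ?leqnSn IH.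
Qed.

Lemma sorted_phase_ids I : sorted leq (phase_ids k I).
Proof. exact: path_sorted (path_phase_ids_from set0 1 I). Qed.

Lemma phase_ids_gt0 I : all (leq 1) (phase_ids k I).
Proof. exact: order_path_min leq_trans (path_phase_ids_from set0 1 I). Qed.

(* [e] records that [B] has already faulted in the current phase; as long as
   it has not, every page requested in the phase so far is in [B]'s cache. *)
Lemma last_phase_ids_from_le B s h C D p (e : bool) :
  e || (D \subset C) -> #|C| <= k ->
  last p (phase_ids_from k D p s) <= p + e + count id (faults_from k B h C s).
Proof.
elim: s h C D p e => [|x s IH] h C D p e /= inv Ck; first by lia.
have Ck' := card_step B (rcons h x) C x Ck.
case: ifP => same_phase /=.
- have inv' : (e || (x \notin C)) || (x |: D \subset step k B (rcons h x) C x).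
    case xC: (x \in C) => /=; last by rewrite orbT.
    rewrite orbF /step xC; case: e inv => //= DC.
    by rewrite subUset sub1set xC DC.
  apply: leq_trans (IH (rcons h x) _ _ p _ inv' Ck') _.
  by case: (e); case: (x \notin C); lia.
- have inv' : false || ([set x] \subset step k B (rcons h x) C x).
    by rewrite sub1set mem_step.
  apply: leq_trans (IH (rcons h x) _ _ p.+1 false inv' Ck') _.
  suff: 0 < e + (x \notin C) by case: (x \notin C); lia.
  (* a new phase starts on a page outside the k pages [D]; if [D] is cached, it
     is the whole cache and [B] faults *)
  case: e inv => //= DC.
  move/negbT: same_phase; rewrite negb_or -leqNgt => /andP[xD kD].
  have /eqP DeC : D == C by rewrite eqEcard DC (leq_trans Ck kD).
  by rewrite -DeC xD.
Qed.

Lemma last_phase_ids_le_cost B I : last 0 (phase_ids k I) <= cost k B I.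
Proof.
case: I => [//|x0 s]; rewrite /phase_ids /cost /= in_set0 cards0 k_gt0 /=.
have first_step : step k B [:: x0] set0 x0 = x0 |: set0.
  by rewrite /step in_set0 cards0 k_gt0.
rewrite first_step; apply: (@last_phase_ids_from_le B s [:: x0] _ _ 1 false).
  by rewrite subxx.
by rewrite cardsU1 in_set0 cards0.
Qed.

Definition phase_pages (j : nat) (s : seq T) (l : seq nat) : seq T :=
  [seq y.1 | y <- zip s l & y.2 == j].

Arguments phase_pages : simpl never.

Lemma phase_pages_cons j x s q l : phase_pages j (x :: s) (q :: l) =
  if q == j then x :: phase_pages j s l else phase_pages j s l.
Proof. by rewrite /phase_pages /=; case: (q == j). Qed.

Lemma phase_pages_nil j s l : all (fun q => j < q) l -> phase_pages j s l = [::].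
Proof.
elim: s l => [|x s IH] [|q l] //= /andP[jq jl].
by rewrite phase_pages_cons gtn_eqF ?IH.
Qed.

(* [D] holds the pages already requested in the current phase [p] *)
Lemma card_phase_pages_from D p s j : #|D| <= k ->
  #|(if j == p then D else set0) :|: [set y in phase_pages j s (phase_ids_from k D p s)]|
  <= k.
Proof.
elim: s D p => [|x s IH] D p Dk /=.
  rewrite /phase_pages /= setU0; case: ifP => // _.
  by rewrite cards0.
case same_phase: ((x \in D) || (#|D| < k)); rewrite phase_pages_cons.
- have xDk : #|x |: D| <= k.
    by rewrite cardsU1; case/orP: same_phase => [->//|]; case: (x \notin D) => /=; lia.
  have := IH _ p xDk; case: (eqVneq j p) => [->|//] IHp.
  apply: leq_trans IHp; apply/subset_leq_card/subsetP => y.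
  by rewrite !inE; case: (y == x); case: (y \in D); case: (y \in phase_pages _ _ _).
- have xk : #|[set x]| <= k by rewrite cards1.
  have := IH [set x] p.+1 xk.
  case: (eqVneq j p) => [->|ne].
    rewrite phase_pages_nil ?(order_path_min leq_trans (path_phase_ids_from _ _ _)) //.
    rewrite (gtn_eqF (ltnSn p)) => _; apply: leq_trans Dk; apply/subset_leq_card.
    by apply/subsetP => y; rewrite !inE orbF.
  case: (eqVneq j p.+1) => [->|//].
  move=> H; apply: leq_trans H; apply/subset_leq_card/subsetP => y.
  by rewrite !inE; case: (y == x); case: (y \in phase_pages _ _ _).
Qed.

Lemma card_phase_pages I j : #|[set y in phase_pages j I (phase_ids k I)]| <= k.
Proof.
have := card_phase_pages_from set0 1 I j; rewrite cards0 if_same set0U.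
exact.
Qed.

Lemma mem_phase_pages I x0 i : i < size I ->
  nth x0 I i \in phase_pages (nth 0 (phase_ids k I) i) I (phase_ids k I).
Proof.
move=> ltiI; apply/mapP; exists (nth x0 I i, nth 0 (phase_ids k I) i) => //.
rewrite mem_filter /= eqxx -nth_zip ?size_phase_ids //.
by apply: mem_nth; rewrite size_zip size_phase_ids minnn.
Qed.

Definition phase_faults A I j : nat :=
  \sum_(0 <= i < size I | nth 0 (phase_ids k I) i == j) fault_at k A I i.

Lemma conservative_phase_faults_le A I j : conservative k A -> phase_faults A I j <= k.
Proof.
move=> consA; rewrite /phase_faults.
set L := phase_ids k I; set n := size I.
have sL : sorted leq L := sorted_phase_ids I.
have sizeL : size L = n := size_phase_ids I.
set a := count (fun q => q < j) L; set b := count (fun q => q < j.+1) L.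
have ab : a <= b by apply: sub_count => q /=; lia.
have bn : b <= n by rewrite -sizeL count_size.
have phaseE i : i < n -> (nth 0 L i == j) = (a <= i < b).
  by move=> ltin; rewrite sorted_nth_eq_count // sizeL.
(* phase [j] is the segment [a, b) of [I] *)
have -> : \sum_(0 <= i < n | nth 0 L i == j) (fault_at k A I i : nat) =
          \sum_(a <= i < b) fault_at k A I i.
  rewrite (@big_cat_nat _ _ _ a 0 n) //=; last exact: leq_trans ab bn.
  rewrite (@big_cat_nat _ _ _ b a n) //=.
  have before : \sum_(0 <= i < a | nth 0 L i == j) (fault_at k A I i : nat) = 0.
    by rewrite big_nat_cond big1 // => i /andP[/andP[_ ia]]; rewrite phaseE; lia.
  have after : \sum_(b <= i < n | nth 0 L i == j) (fault_at k A I i : nat) = 0.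
    by rewrite big_nat_cond big1 // => i /andP[/andP[bi ltin]]; rewrite phaseE; lia.
  rewrite before after add0n addn0 big_nat_cond [RHS]big_nat_cond.
  apply: eq_bigl => i; case/boolP: (a <= i < b) => [abi|//].
  by rewrite andbT /= phaseE ?abi //; lia.
apply: consA; first by rewrite ab bn.
apply: leq_trans (card_phase_pages I j); apply/subset_leq_card/subsetP => y.
rewrite !inE => /(nthP y) [m]; rewrite size_takel ?size_drop -/n; last by lia.
move=> ltm <-; rewrite nth_take // nth_drop.
have /eqP <- : nth 0 L (a + m) == j by rewrite phaseE; lia.
by apply: mem_phase_pages; lia.
Qed.

(* a marking [A] still caches the earlier page just before the later request *)
Lemma marking_fault_new_page A I x0 i i' : marking k A -> i < i' < size I ->
  nth 0 (phase_ids k I) i = nth 0 (phase_ids k I) i' -> fault_at k A I i' ->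
  nth x0 I i != nth x0 I i'.
Proof.
move=> markA /andP[ltii' lti'I] same_phase.
have sL := sorted_phase_ids I; have sizeL := size_phase_ids I.
have le_nth := sorted_leq_nth leq_trans leqnn 0 sL.
have same_phase' : nth 0 (phase_ids k I) i = nth 0 (phase_ids k I) i'.-1.
  apply/eqP; rewrite eqn_leq le_nth ?inE ?sizeL //=; try lia.
  by rewrite same_phase le_nth ?inE ?sizeL //=; lia.
have := markA I x0 i i'.-1 _ same_phase'; rewrite prednK; last by lia.
rewrite /fault_at (nth_faults_from _ _ _ _ x0) // => cached /negP uncached.
by apply/eqP => samepage; apply: uncached; rewrite -samepage; apply: cached; lia.
Qed.

Lemma marking_phase_faults_le A I j x0 : marking k A -> phase_faults A I j <= k.
Proof.
move=> markA; rewrite /phase_faults big_mkord.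
set n := size I; set L := phase_ids k I.
set S := [set i : 'I_n | (nth 0 L i == j) && fault_at k A I i].
have -> : \sum_(i < n | nth 0 L i == j) (fault_at k A I i : nat) = #|S|.
  rewrite -sum1_card big_mkcond [RHS]big_mkcond /=; apply: eq_bigr => i _.
  by rewrite inE; case: (_ == j); case: fault_at.
have inj_page : {in S &, injective (fun i : 'I_n => nth x0 I i)}.
  move=> i i'; rewrite !inE => /andP[/eqP phi fi] /andP[/eqP phi' fi'] samepage.
  have ltn' (m : 'I_n) : m < size I := ltn_ord m.
  case: (ltngtP i i') => [lt|gt|/val_inj //].
    have := @marking_fault_new_page A I x0 i i' markA.
    by rewrite lt ltn' phi phi' samepage eqxx => /(_ isT erefl fi').
  have := @marking_fault_new_page A I x0 i' i markA.
  by rewrite gt ltn' phi phi' samepage eqxx => /(_ isT erefl fi).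
rewrite -(card_in_imset inj_page); apply: leq_trans (card_phase_pages I j).
apply/subset_leq_card/subsetP => y /imsetP[i]; rewrite !inE => /andP[/eqP <- _] ->.
exact: mem_phase_pages.
Qed.

Lemma cost_le_cost_plus_size A B I : conservative k A \/ marking k A ->
  k * cost k A I <= k.-1 * size I + k * cost k B I.
Proof.
move=> consA_or_markA.
case: I => [|x0 s]; first by rewrite /cost /= muln0.
set I := x0 :: s; set L := phase_ids k I.
have phase_range i : i < size I -> 0 < nth 0 L i <= last 0 L.
  move=> ltiI; apply/andP; split.
    by apply: (all_nthP 0 (phase_ids_gt0 I)); rewrite size_phase_ids.
  rewrite -nth_last size_phase_ids.
  by apply: (sorted_leq_nth leq_trans leqnn 0 (sorted_phase_ids I));
    rewrite ?inE ?size_phase_ids /=; move: ltiI; rewrite /I /=; lia.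
have phase_faults_le j : phase_faults A I j <= k.
  by case: consA_or_markA => [/conservative_phase_faults_le|/(marking_phase_faults_le _ _ _ x0)].
rewrite cost_sum_fault_at.
apply: leq_trans
  (@sum_bool_classes_le k _ _ (nth 0 L) (fault_at k A I) k_gt0 phase_range phase_faults_le) _.
by rewrite leq_add2l leq_mul2l last_phase_ids_le_cost orbT.
Qed.

End Phases.

From mathcomp Require Import all_classical all_reals all_analysis.
From mathcomp Require Import lra.
Import Order.TTheory GRing.Theory Num.Theory.
Local Open Scope ring_scope.

Lemma cost_diff_le (R : realType) (T : finType) (k : nat) (A B : paging_alg T)
    (I : seq T) : (0 < k)%N -> conservative k A \/ marking k A ->
  (cost k A I)%:R - (cost k B I)%:R <= (1 - k%:R^-1) * (size I)%:R :> R.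
Proof.
move=> k_gt0 consA_or_markA.
have := @cost_le_cost_plus_size T k k_gt0 A B I consA_or_markA.
rewrite -(ler_nat R) natrD !natrM -subn1 natrB // => kA_le.
have k_gt0R : 0 < k%:R :> R by rewrite ltr0n.
have scaledE : k%:R * ((1 - k%:R^-1) * (size I)%:R) = (k%:R - 1) * (size I)%:R :> R.
  by rewrite mulrA mulrBr mulr1 mulfV ?gt_eqF.
rewrite -(ler_pM2l k_gt0R) scaledE; lra.
Qed.

Section Limits.
Context {R : realType}.
Local Open Scope ereal_scope.

Lemma limn_esup_le (u : (\bar R)^nat) (c : \bar R) (N : nat) :
  (forall n, (N <= n)%N -> u n <= c) -> limn_esup u <= c.
Proof.
move=> uc; rewrite limn_esup_lim; apply: lime_le; first exact: is_cvg_esups.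
near=> m; apply: ge_ereal_sup => _ [n /= mn <-]; apply: uc.
by apply: leq_trans mn; near: m; exists N.
Unshelve. all: by end_near.
Qed.

Lemma limn_einf_ge (u : (\bar R)^nat) (c : \bar R) (N : nat) :
  (forall n, (N <= n)%N -> c <= u n) -> c <= limn_einf u.
Proof.
move=> uc; rewrite limn_einf_lim; apply: lime_ge; first exact: is_cvg_einfs.
near=> m; apply: le_ereal_inf_tmp => _ [n /= mn <-]; apply: uc.
by apply: leq_trans mn; near: m; exists N.
Unshelve. all: by end_near.
Qed.

End Limits.

Section RelativeInterval.
Variables (R : realType) (T : finType) (k : nat) (A B : paging_alg T) (G : rel T).
Hypotheses (k_gt0 : (0 < k)%N) (consA_or_markA : conservative k A \/ marking k A).
Local Open Scope ereal_scope.

Lemma MaxAB_le n : (0 < n)%N ->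
  MaxAB R k A B n G * (n%:R^-1)%:E <= (1 - k%:R^-1)%:E.
Proof.
move=> n_gt0; have n_gt0R : (0 < n%:R :> R)%R by rewrite ltr0n.
rewrite -[X in _ <= X%:E](mulfK (lt0r_neq0 n_gt0R)) EFinM.
apply: lee_wpmul2r; first by rewrite lee_fin invr_ge0 ltW.
apply: ge_ereal_sup => _ [I [_ <-] <-]; rewrite lee_fin.
exact: cost_diff_le.
Qed.

Lemma MinAB_ge n : (0 < n)%N ->
  (- 1 + k%:R^-1)%:E <= MinAB R k B A n G * (n%:R^-1)%:E.
Proof.
move=> n_gt0; have n_gt0R : (0 < n%:R :> R)%R by rewrite ltr0n.
rewrite -[X in X%:E <= _](mulfK (lt0r_neq0 n_gt0R)) EFinM.
apply: lee_wpmul2r; first by rewrite lee_fin invr_ge0 ltW.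
apply: le_ereal_inf_tmp => _ [I [_ <-] <-]; rewrite lee_fin.
have := @cost_diff_le R T k A B I k_gt0 consA_or_markA; lra.
Qed.

End RelativeInterval.

(* The bound holds for every request sequence. *)
Theorem proposition1 (R : realType) (T : finType) (k : nat) (A B : paging_alg T)
  (G : rel T) :
  (1 <= k)%N ->
  symmetric G -> irreflexive G ->
  conservative k A \/ marking k A ->
  ((- 1 + (k%:R)^-1)%:E <= MinG R k G B A)%E /\
  (MaxG R k G A B <= (1 - (k%:R)^-1)%:E)%E.
Proof.
move=> k_gt0 _ _ consA_or_markA; split.
- by apply: (@limn_einf_ge _ _ _ 1) => n; apply: MinAB_ge.
- by apply: (@limn_esup_le _ _ _ 1) => n; apply: MaxAB_le.
Qed.
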